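(* Let $m\ge1$, let $\mathcal{X},\mathcal{A}_1,\dots,\mathcal{A}_m$ be finite sets with $|\mathcal{X}|=d\ge2$, and let $P$ be a probability distribution on $\mathcal{X}\times\mathcal{A}_1\times\cdots\times\mathcal{A}_m$ such that $\omega_{\mathrm{c}}<\omega_{\mathrm{ns}}$. Then there is a no-signalling correlation $Q$ which is a vertex of the no-signalling polytope, which attains $\omega_{\mathrm{ns}}$, and for which there exist $x\in\mathcal{X}$ and $a_1\in\mathcal{A}_1,\dots,a_m\in\mathcal{A}_m$ with $Q(x,\dots,x|a_1,\dots,a_m)>1/d$.
   Context: $\delta$ is the indicator function. An $m$-partite no-signalling correlation is a conditional distribution $Q(x_1,\dots,x_m|a_1,\dots,a_m)$ on $\mathcal{X}^m$ given $(a_1,\dots,a_m)\in\mathcal{A}_1\times\cdots\times\mathcal{A}_m$ such that for every index set $I\subset\{1,\dots,m\}$ with complement $J$, $\sum_{x_J}Q(x_I,x_J|a_I,a_J)$ does not depend on $a_J$; the set of all such $Q$ is a convex polytope (the no-signalling polytope). $\omega_{\mathrm{ns}}=\max_Q\sum_{x,a_1,\dots,a_m}P(x,a_1,\dots,a_m)Q(x,\dots,x|a_1,\dots,a_m)$ over no-signalling $Q$, and $\omega_{\mathrm{c}}=\max_{f_1,\dots,f_m}\sum P(x,a_1,\dots,a_m)\delta[f_1(a_1)=\cdots=f_m(a_m)=x]$ over functions $f_i\colon\mathcal{A}_i\to\mathcal{X}$. *)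

From HB Require Import structures.
From mathcomp Require Import all_boot all_order all_algebra.
From mathcomp Require Import reals.
Set Implicit Arguments. Unset Strict Implicit. Unset Printing Implicit Defensive.
Import Order.TTheory GRing.Theory Num.Theory.
Local Open Scope ring_scope.

(* m parties, question sets A i (i : 'I_m), common answer set X. *)
Section NS.
Variables (R : realType) (m : nat) (X : finType) (A : 'I_m -> finType).

Definition inputs := {dffun forall i : 'I_m, A i}.
Definition outputs := {ffun 'I_m -> X}.
Definition corr := outputs -> inputs -> R.

Definition marginal (Q : corr) (I : {set 'I_m}) (x : outputs) (a : inputs) : R :=
  \sum_(y : outputs | [forall i in I, y i == x i]) Q y a.

Definition no_signalling (Q : corr) : Prop :=
  (forall x a, 0 <= Q x a) /\
  (forall a, \sum_(x : outputs) Q x a = 1) /\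
  (forall (I : {set 'I_m}) (x : outputs) (a a' : inputs),
      [forall i in I, a i == a' i] -> marginal Q I x a = marginal Q I x a').

Definition ns_vertex (Q : corr) : Prop :=
  no_signalling Q /\
  forall (Q1 Q2 : corr) (t : R), no_signalling Q1 -> no_signalling Q2 ->
    0 < t < 1 -> (forall x a, Q x a = t * Q1 x a + (1 - t) * Q2 x a) ->
    (forall x a, Q1 x a = Q x a) /\ (forall x a, Q2 x a = Q x a).

Definition is_distr (P : X -> inputs -> R) : Prop :=
  (forall x a, 0 <= P x a) /\ \sum_(x : X) \sum_(a : inputs) P x a = 1.

Definition diag (x : X) : outputs := [ffun=> x].

Definition game_value (P : X -> inputs -> R) (Q : corr) : R :=
  \sum_(x : X) \sum_(a : inputs) P x a * Q (diag x) a.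

Definition strategies := {dffun forall i : 'I_m, {ffun A i -> X}}.

Definition classical_value (P : X -> inputs -> R) (f : strategies) : R :=
  \sum_(x : X) \sum_(a : inputs)
     P x a * (if [forall i, f i (a i) == x] then 1 else 0).

Definition omega_c (P : X -> inputs -> R) : R :=
  \big[Num.max/0]_(f : strategies) classical_value P f.

Definition attains_omega_ns (P : X -> inputs -> R) (Q : corr) : Prop :=
  no_signalling Q /\ forall Q', no_signalling Q' -> game_value P Q' <= game_value P Q.

(* omega_c < omega_ns (omega_ns is a maximum over the compact NS polytope) *)
Definition omega_c_lt_omega_ns (P : X -> inputs -> R) : Prop :=
  exists Q', no_signalling Q' /\ omega_c P < game_value P Q'.

End NS.

From HB Require Import structures.
From mathcomp Require Import all_boot all_order all_algebra.
From mathcomp Require Import reals boolp.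
From mathcomp Require Import lra.
Import Order.TTheory GRing.Theory Num.Theory.
Set Implicit Arguments. Unset Strict Implicit. Unset Printing Implicit Defensive.
Local Open Scope ring_scope.

(* Call a no-signalling Q rigid if every direction of the affine hull of the
   polytope that vanishes wherever Q does is zero.  Rigid points are vertices,
   and a rigid point is determined by its support, so there are finitely many
   of them.  From any no-signalling Q one reaches a rigid point without
   decreasing the game value: move along a nonzero direction supported in
   supp Q, with the sign that does not decrease the value, until some entry
   hits 0.  Hence the best rigid point attains omega_ns.  If all its diagonal
   entries were at most 1/d, its value would be at most 1/d; but answering the
   most likely x on every question already wins with probability at least
   1/d, so 1/d <= omega_c < omega_ns. *)

Section FiniteKeyMax.
Variables (R : realDomainType) (I : finType) (C : Type).
Variables (p : C -> Prop) (key : C -> I) (f : C -> R).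
Hypothesis f_key : forall c c', p c -> p c' -> key c = key c' -> f c = f c'.

Lemma ex_max_finite_key_in (K : {set I}) : (exists c, p c /\ key c \in K) ->
  exists2 c, p c & forall c', p c' -> key c' \in K -> f c' <= f c.
Proof.
move: {2}#|K| (leqnn #|K|) => n; elim: n K => [|n IH] K.
  by rewrite leqn0 => /eqP/cards0_eq -> [c []]; rewrite inE.
move=> Kn [c [pc cK]].
have Kc_n : (#|K :\ key c| <= n)%N by rewrite (cardsD1 (key c)) cK in Kn.
have keyK c' : p c' -> key c' \in K -> key c' = key c \/ key c' \in K :\ key c.
  by move=> _ c'K; have [|ne] := eqVneq (key c') (key c); [left | right; rewrite !inE ne].
have [[c1 [pc1 c1K]]|none] := pselect (exists c1, p c1 /\ key c1 \in K :\ key c).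
  have [c2 pc2 c2max] := IH _ Kc_n (ex_intro _ c1 (conj pc1 c1K)).
  have [le|lt] := leP (f c) (f c2).
    exists c2 => // c' pc' /(keyK _ pc') [e|]; last exact: c2max.
    by rewrite (f_key pc' pc e).
  exists c => // c' pc' /(keyK _ pc') [e|c'K]; first by rewrite (f_key pc' pc e).
  exact: le_trans (c2max _ pc' c'K) (ltW lt).
exists c => // c' pc' /(keyK _ pc') [e|c'K]; first by rewrite (f_key pc' pc e).
by case: none; exists c'.
Qed.

Lemma ex_max_finite_key : (exists c, p c) ->
  exists2 c, p c & forall c', p c' -> f c' <= f c.
Proof.
move=> [c pc]; have [|c0 pc0 c0max] := @ex_max_finite_key_in setT.
  by exists c; rewrite inE.
by exists c0 => // c' pc'; apply: c0max; rewrite ?inE.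
Qed.

End FiniteKeyMax.

Lemma ex_ge_mean (R : realFieldType) (T : finType) (F : T -> R) : (0 < #|T|)%N ->
  exists x, (\sum_y F y) / #|T|%:R <= F x.
Proof.
move=> T_gt0; apply: contrapT => /forallNP lt_mean.
have [y _] := card_gt0P T_gt0.
have : \sum_y F y < \sum_(y : T) (\sum_y F y) / #|T|%:R.
  apply: ltr_sum; first by apply/hasP; exists y => //; exact: mem_index_enum.
  by move=> x _; rewrite ltNge; apply/negP/lt_mean.
by rewrite sumr_const -[X in _ < X]mulr_natr divfK ?ltxx // pnatr_eq0 -lt0n.
Qed.

Section NoSignallingPolytope.
Variables (R : realType) (m : nat) (X : finType) (A : 'I_m -> finType).
Local Notation corr := (corr R X A).
Local Notation outputs := (outputs m X).
Local Notation inputs := (inputs A).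

Definition ns_direction (D : corr) : Prop :=
  (forall a, \sum_(x : outputs) D x a = 0) /\
  (forall (I : {set 'I_m}) (x : outputs) (a a' : inputs),
      [forall i in I, a i == a' i] -> marginal D I x a = marginal D I x a').

Definition corr_support (Q : corr) : {set outputs * inputs} :=
  [set k | Q k.1 k.2 != 0].

Definition ns_rigid (Q : corr) : Prop :=
  forall D, ns_direction D -> (forall x a, Q x a = 0 -> D x a = 0) ->
  forall x a, D x a = 0.

Definition corr_shift (Q D : corr) (t : R) : corr := fun x a => Q x a + t * D x a.

Lemma marginal_shift Q D t I x a :
  marginal (corr_shift Q D t) I x a = marginal Q I x a + t * marginal D I x a.
Proof. by rewrite /marginal big_split mulr_sumr. Qed.

Lemma ns_directionN D : ns_direction D -> ns_direction (fun x a => - D x a).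
Proof.
move=> [sumD margD]; split=> [a|I x a a' eqa]; first by rewrite sumrN sumD oppr0.
by rewrite /marginal !sumrN; congr (- _); exact: margD.
Qed.

Lemma ns_direction_sub Q1 Q2 : no_signalling Q1 -> no_signalling Q2 ->
  ns_direction (fun x a => Q1 x a - Q2 x a).
Proof.
move=> [_ [sum1 marg1]] [_ [sum2 marg2]].
split=> [a|I x a a' eqa]; first by rewrite sumrB sum1 sum2 subrr.
by rewrite /marginal !sumrB -!/(marginal _ _ _ _) (marg1 _ _ _ _ eqa) (marg2 _ _ _ _ eqa).
Qed.

Lemma no_signalling_shift Q D t : no_signalling Q -> ns_direction D ->
  (forall x a, 0 <= corr_shift Q D t x a) -> no_signalling (corr_shift Q D t).
Proof.
move=> [_ [sumQ margQ]] [sumD margD] ge0; split=> //; split=> [a|I x a a' eqa].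
  by rewrite /corr_shift big_split /= -mulr_sumr sumQ sumD mulr0 addr0.
by rewrite !marginal_shift (margQ _ _ _ _ eqa) (margD _ _ _ _ eqa).
Qed.

Lemma ns_rigid_vertex Q : no_signalling Q -> ns_rigid Q -> ns_vertex Q.
Proof.
move=> nsQ rigidQ; split=> // Q1 Q2 t ns1 ns2 /andP[t_gt0 t_lt1] Qmix.
have Q1E x a : Q1 x a = Q x a.
  apply/eqP; rewrite -subr_eq0; apply/eqP; move: x a.
  apply: (rigidQ _ (ns_direction_sub ns1 nsQ)) => x a Qxa.
  have := Qmix x a; have := ns1.1 x a; have := ns2.1 x a; rewrite Qxa.
  have : 0 < 1 - t by rewrite subr_gt0.
  by nra.
split=> // x a; have := Qmix x a; rewrite Q1E.
have : 0 < 1 - t by rewrite subr_gt0.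
by nra.
Qed.

Lemma ns_rigid_support_eq V W : no_signalling V -> no_signalling W ->
  ns_rigid V -> corr_support V = corr_support W -> W = V.
Proof.
move=> nsV nsW rigidV suppVW; apply/funext=> x; apply/funext=> a.
apply/eqP; rewrite -subr_eq0; apply/eqP; move: x a.
apply: (rigidV _ (ns_direction_sub nsW nsV)) => x a Vxa.
have : (x, a) \notin corr_support W by rewrite -suppVW inE Vxa eqxx.
by rewrite inE negbK Vxa => /eqP ->; rewrite subr0.
Qed.

Lemma ns_direction_neg_entry D x0 a0 : ns_direction D -> D x0 a0 != 0 ->
  exists k, D k.1 k.2 < 0.
Proof.
move=> [sumD _] Dx0; case: ltrgtP Dx0 => // [neg|pos] _; first by exists (x0, a0).
apply: contrapT => /forallNP nonneg.
have : 0 < \sum_(x : outputs) D x a0.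
  rewrite (bigD1 x0) //= ltr_wpDr // sumr_ge0 // => x _.
  by rewrite leNgt; apply/negP => neg; apply: (nonneg (x, a0)).
by rewrite sumD ltxx.
Qed.

Lemma shrink_support Q D : no_signalling Q -> ns_direction D ->
  (forall x a, Q x a = 0 -> D x a = 0) -> (exists k, D k.1 k.2 < 0) ->
  exists2 t, 0 <= t & no_signalling (corr_shift Q D t) /\
    (#|corr_support (corr_shift Q D t)| < #|corr_support Q|)%N.
Proof.
move=> nsQ dirD QD [k0 Dk0].
pose ratio (k : outputs * inputs) := Q k.1 k.2 / - D k.1 k.2.
case: (@arg_minP _ _ _ k0 (fun k => D k.1 k.2 < 0) ratio Dk0) => k Dk kmin.
(* the largest step along D keeping every entry nonnegative; it zeroes entry k *)
set t := ratio k.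
have t_ge0 : 0 <= t by rewrite divr_ge0 ?nsQ.1 // oppr_ge0 ltW.
have shift_ge0 x a : 0 <= corr_shift Q D t x a.
  rewrite /corr_shift; case: (ltP (D x a) 0) => [Dxa|Dxa].
    by have := kmin (x, a) Dxa; rewrite -/t /ratio /= ler_pdivlMr ?oppr_gt0 // mulrN; lra.
  by rewrite addr_ge0 ?nsQ.1 // mulr_ge0.
exists t => //; split; first exact: no_signalling_shift.
apply/proper_card/properP; split.
  apply/subsetP=> -[x a]; rewrite !inE /corr_shift; apply: contraNN => /eqP Qxa.
  by rewrite Qxa (QD _ _ Qxa) mulr0 addr0.
exists k; rewrite !inE /corr_shift.
  by apply: contraTneq Dk => /QD ->; rewrite ltxx.
by rewrite negbK /t /ratio invrN mulrN mulNr divfK ?subrr // ltr0_neq0.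
Qed.

Variable P : X -> inputs -> R.

Lemma game_value_shift Q D t :
  game_value P (corr_shift Q D t) = game_value P Q + t * game_value P D.
Proof.
rewrite /game_value mulr_sumr -big_split; apply: eq_bigr => x _ /=.
by rewrite mulr_sumr -big_split; apply: eq_bigr => a _; rewrite /corr_shift mulrDr mulrCA.
Qed.

Lemma game_valueN D : game_value P (fun x a => - D x a) = - game_value P D.
Proof.
rewrite /game_value -sumrN; apply: eq_bigr => x _.
by rewrite -sumrN; apply: eq_bigr => a _; rewrite mulrN.
Qed.

Lemma improve_non_rigid Q : no_signalling Q -> ~ ns_rigid Q ->
  exists2 Q', no_signalling Q' &
    (#|corr_support Q'| < #|corr_support Q|)%N /\ game_value P Q <= game_value P Q'.
Proof.
move=> nsQ /existsNP[D /not_implyP[dirD /not_implyP[QD]]].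
move=> /existsNP[x /existsNP[a /eqP Dxa]].
wlog vD : D dirD QD Dxa / 0 <= game_value P D.
  move=> base; have [|vD] := leP 0 (game_value P D); first exact: base.
  apply: (base (fun x a => - D x a)); first exact: ns_directionN.
  - by move=> x' a' /QD ->; rewrite oppr0.
  - by rewrite oppr_eq0.
  - by rewrite game_valueN oppr_ge0 ltW.
have [t t_ge0 [nsQ' suppQ']] := shrink_support nsQ dirD QD (ns_direction_neg_entry dirD Dxa).
exists (corr_shift Q D t) => //; split=> //.
by rewrite game_value_shift lerDl mulr_ge0.
Qed.

Lemma ex_rigid_ge Q : no_signalling Q ->
  exists2 V, no_signalling V /\ ns_rigid V & game_value P Q <= game_value P V.
Proof.
move: {2}#|corr_support Q|.+1 (ltnSn #|corr_support Q|) => n.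
elim: n Q => // n IH Q suppQ nsQ.
have [rigidQ|/(improve_non_rigid nsQ)[Q' nsQ' [suppQ' leQQ']]] := pselect (ns_rigid Q).
  by exists Q.
have [|V rigidV leQ'V] := IH Q' _ nsQ'; first exact: leq_trans suppQ' suppQ.
by exists V => //; exact: le_trans leQQ' leQ'V.
Qed.

Lemma ex_rigid_attains_omega_ns : (exists Q : corr, no_signalling Q) ->
  exists2 V, ns_rigid V & attains_omega_ns P V.
Proof.
move=> [Q nsQ].
have [V [nsV rigidV] Vmax] : exists2 V, no_signalling V /\ ns_rigid V &
    forall W, no_signalling W /\ ns_rigid W -> game_value P W <= game_value P V.
  apply: (@ex_max_finite_key _ _ _ _ corr_support).
  - by move=> V W [nsV rigidV] [nsW _] /(ns_rigid_support_eq nsV nsW rigidV) ->.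
  - by have [V ? _] := ex_rigid_ge nsQ; exists V.
exists V => //; split=> // W nsW.
by have [W' nsW' leWW'] := ex_rigid_ge nsW; exact: le_trans leWW' (Vmax _ nsW').
Qed.

End NoSignallingPolytope.

Section ClassicalBound.
Variables (R : realType) (m : nat) (X : finType) (A : 'I_m -> finType).
Variable P : X -> inputs A -> R.

Definition const_strategy (x : X) : strategies X A := [ffun=> [ffun=> x]].

Lemma classical_value_const x : (0 < m)%N ->
  classical_value P (const_strategy x) = \sum_(a : inputs A) P x a.
Proof.
move=> m_gt0; rewrite /classical_value (bigD1 x) //= [X in _ + X]big1 ?addr0 => [|y yx].
  by apply: eq_bigr => a _; rewrite ifT ?mulr1 //; apply/forallP => i; rewrite !ffunE.
apply: big1 => a _; rewrite ifF ?mulr0 //; apply/negbTE/forallP => /(_ (Ordinal m_gt0)).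
by rewrite !ffunE eq_sym (negbTE yx).
Qed.

Lemma omega_c_ge_inv_card : (0 < m)%N -> (0 < #|X|)%N -> is_distr P ->
  #|X|%:R^-1 <= omega_c P.
Proof.
move=> m_gt0 X_gt0 [_ P1].
have [x mean_le] := ex_ge_mean (fun x => \sum_(a : inputs A) P x a) X_gt0.
rewrite P1 mul1r -classical_value_const // in mean_le.
exact: le_trans mean_le (le_bigmax _ _ _).
Qed.

Lemma game_value_le_diag (Q : corr R X A) c : is_distr P ->
  (forall x a, Q (diag m x) a <= c) -> game_value P Q <= c.
Proof.
move=> [P_ge0 P1] Q_le; rewrite -[c]mul1r -P1 mulr_suml; apply: ler_sum => x _.
by rewrite mulr_suml; apply: ler_sum => a _; apply: ler_wpM2l.
Qed.

End ClassicalBound.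

Theorem mainTheorem10 (R : realType) (m : nat) (X : finType)
  (A : 'I_m -> finType) (P : X -> inputs A -> R) :
  (1 <= m)%N -> (2 <= #|X|)%N -> is_distr P -> omega_c_lt_omega_ns P ->
  exists Q : corr R X A,
    no_signalling Q /\ ns_vertex Q /\ attains_omega_ns P Q /\
    exists (x : X) (a : inputs A), Q (diag m x) a > (#|X|%:R)^-1.
Proof.
move=> m_gt0 X_ge2 distrP [Q [nsQ omega_c_lt]].
have [V rigidV [nsV Vmax]] := ex_rigid_attains_omega_ns P (ex_intro _ Q nsQ).
exists V; split=> //; split; first exact: ns_rigid_vertex.
split; first by split.
apply: contrapT => no_large_entry.
have diag_le x a : V (diag m x) a <= #|X|%:R^-1.
  by rewrite leNgt; apply/negP => large; apply: no_large_entry; exists x, a.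
have := game_value_le_diag distrP diag_le.
have := omega_c_ge_inv_card m_gt0 (ltnW X_ge2) distrP.
have := Vmax _ nsQ.
lra.
Qed.
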